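(* Let $A$ be a Frobenius algebra of dimension $n$ over a field $\mathbb{k}$ with bilinear form $B$ and Nakayama automorphism $\nu$. Let $\{e_1,\dots,e_n\}$ be a basis of $A$ and $\{e_1^\#,\dots,e_n^\#\}$ the dual basis with $B(e_i^\#,e_j)=\delta_{ij}$, and let $\Delta\in\mathcal{E}_A$ be the Frobenius coproduct $\Delta(x)=\sum_{i=1}^n xe_i\otimes e_i^\#$. Let $M=A\star\Delta=\{a\star\Delta: a\in A\}\subseteq\mathcal{E}_A$ be the left $A$-submodule generated by $\Delta$. Then $\dim_{\mathbb{k}}M=n$.
   Context: A Frobenius algebra over a field $\mathbb{k}$ is a finite-dimensional associative unital $\mathbb{k}$-algebra $A$ with a nondegenerate bilinear form $B:A\times A\to\mathbb{k}$ with $B(ab,c)=B(a,bc)$. Its Nakayama automorphism is the algebra automorphism $\nu:A\to A$ with $B(x,y)=B(y,\nu(x))$ for all $x,y\in A$. The Frobenius space $\mathcal{E}_A$ is the $\mathbb{k}$-vector space of all $\mathbb{k}$-linear maps $\Delta:A\to A\otimes_{\mathbb{k}} A$ that are $A$-bimodule homomorphisms, where $A\otimes A$ has bimodule structure $a(x\otimes y)b=ax\otimes yb$; such a $\Delta$ is determined by $\Delta(1_A)$ via $\Delta(x)=(x\otimes 1)\Delta(1_A)$. The left $A$-module structure $\star$ on $\mathcal{E}_A$ is defined by $(a\star\Delta)(1_A)=(1\otimes\nu^{-1}(a))\Delta(1_A)$, i.e. if $\Delta(1_A)=\sum_j x_j\otimes y_j$ then $a\star\Delta$ is the element of $\mathcal{E}_A$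 with $(a\star\Delta)(1_A)=\sum_j x_j\otimes\nu^{-1}(a)y_j$. *)

From HB Require Import structures.
From mathcomp Require Import all_boot all_order all_algebra.
From mathcomp Require Import falgebra.
Set Implicit Arguments. Unset Strict Implicit. Unset Printing Implicit Defensive.
Import Order.TTheory GRing.Theory Num.Theory.
Local Open Scope ring_scope.

(* A is modelled as an falgType over a field K (finite-dimensional unital   *)
(* associative K-algebra).  The tensor product A (x) A is modelled as the    *)
(* space of \dim A x \dim A matrices of coordinates with respect to the      *)
(* canonical basis [vbasis {:A}]:  t = \sum_(i,j) t i j  b_i (x) b_j.        *)

Section Tensor.
Variables (K : fieldType) (A : falgType K).

Definition tbasis : (\dim {:A}).-tuple A := vbasis {:A}.

Definition tensor := 'M[K]_(\dim {:A}).

Definition tens (x y : A) : tensor :=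
  \matrix_(i, j) (coord tbasis i x * coord tbasis j y).

(* multiplication in the algebra A (x) A : (a (x) b)(c (x) d) = ac (x) bd,   *)
(* extended bilinearly *)
Definition tmul (s t : tensor) : tensor :=
  \sum_i \sum_j \sum_k \sum_l
     (s i j * t k l) *: tens (tbasis`_i * tbasis`_k) (tbasis`_j * tbasis`_l).

(* The left A-module structure on the Frobenius space:                      *)
(* (a * D)(1) = (1 (x) nuinv a) D(1), and (a * D)(x) = (x (x) 1) (a * D)(1). *)
Definition star (nuinv : A -> A) (a : A) (D : A -> tensor) : A -> tensor :=
  fun x => tmul (tens x 1) (tmul (tens 1 (nuinv a)) (D 1)).

Definition frob_coprod n (e ed : n.-tuple A) : A -> tensor :=
  fun x => \sum_(i < n) tens (x * e`_i) ed`_i.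

End Tensor.

From HB Require Import structures.
From mathcomp Require Import all_boot all_order all_algebra falgebra.
Set Implicit Arguments. Unset Strict Implicit. Unset Printing Implicit Defensive.
Import GRing.Theory.
Local Open Scope ring_scope.

(* The map a ↦ a ⋆ Δ is K-linear, so M is its image and it suffices to show
   that it is injective.  Contracting the second tensor factor of
   (a ⋆ Δ)(1) = Σ_i e_i ⊗ ν⁻¹(a) e_i^# against the Frobenius form ε = B(-, 1)
   recovers a: the Nakayama relation gives ε(ν⁻¹(a) y) = B(y, a), and the
   B(e_i^#, -) are the coordinate functionals of the basis e, so the
   contraction is Σ_i B(e_i^#, a) e_i = a. *)

Section TensorAlgebra.
Variables (K : fieldType) (A : falgType K).
Local Notation b := (tbasis A).

Lemma tens_is_bilinear : bilinear_for *:%R *:%R (@tens K A).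
Proof.
split=> [y c x x' | x c y y']; apply/matrixP=> i j; rewrite !mxE linearP /=.
  by rewrite mulrDl mulrA.
by rewrite mulrDr mulrCA.
Qed.

HB.instance Definition _ :=
  bilinear_isBilinear.Build K A A (tensor A) *:%R *:%R (@tens K A) tens_is_bilinear.

Lemma tmul_is_bilinear : bilinear_for *:%R *:%R (@tmul K A).
Proof.
split=> [t c s s' | s c t t'] /=; rewrite /tmul scaler_sumr -big_split;
  apply: eq_bigr => i _; rewrite scaler_sumr -big_split; apply: eq_bigr => j _;
  rewrite scaler_sumr -big_split; apply: eq_bigr => k _;
  rewrite scaler_sumr -big_split; apply: eq_bigr => l _.
  by rewrite !mxE mulrDl scalerDl scalerA mulrA.
by rewrite !mxE mulrDr scalerDl scalerA mulrCA.
Qed.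

HB.instance Definition _ :=
  bilinear_isBilinear.Build K (tensor A) (tensor A) (tensor A) *:%R *:%R
    (@tmul K A) tmul_is_bilinear.

Lemma tmul_tens (x y z w : A) : tmul (tens x y) (tens z w) = tens (x * z) (y * w).
Proof.
have expandM u v : u * v = \sum_i \sum_k (coord b i u * coord b k v) *: (b`_i * b`_k).
  rewrite {1}(coord_vbasis (memvf u)) {1}(coord_vbasis (memvf v)) mulr_suml.
  apply: eq_bigr => i _; rewrite mulr_sumr; apply: eq_bigr => k _.
  by rewrite -scalerAl -scalerAr scalerA.
rewrite /tmul (expandM x z) (expandM y w) linear_sumlz; apply: eq_bigr => i _.
rewrite linear_sumr; apply: eq_bigr => j _.
rewrite linear_sumlz; apply: eq_bigr => k _; rewrite linear_sumr; apply: eq_bigr => l _.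
by rewrite linearZl_LR linearZr_LR !mxE mulrACA -scalerA.
Qed.

Lemma star_is_linear nuinv a D : linear (@star K A nuinv a D).
Proof. by move=> c x y; rewrite /star !linearPl. Qed.

HB.instance Definition _ nuinv a D :=
  GRing.isLinear.Build K A (tensor A) *:%R (star nuinv a D) (star_is_linear nuinv a D).

Lemma star_frob_coprod nuinv a n (e ed : n.-tuple A) x :
  star nuinv a (frob_coprod e ed) x = \sum_(i < n) tens (x * e`_i) (nuinv a * ed`_i).
Proof.
(* An unrestricted [linear_sumr] would unfold the inner [tmul], itself a sum. *)
rewrite /star [frob_coprod _ _ _]/= [tmul (tens 1 _) _]linear_sumr linear_sumr.
by apply: eq_bigr => i _; rewrite /= !tmul_tens !mul1r.
Qed.

Definition contr (phi : A -> K) (t : tensor A) : A :=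
  \sum_p (\sum_q t p q * phi b`_q) *: b`_p.

Lemma contr_is_linear phi : linear (contr phi).
Proof.
move=> c s t; rewrite /contr scaler_sumr -big_split /=; apply: eq_bigr => p _.
rewrite scalerA -scalerDl mulr_sumr -big_split /=; congr (_ *: _).
by apply: eq_bigr => q _; rewrite !mxE mulrDl mulrA.
Qed.

HB.instance Definition _ phi :=
  GRing.isLinear.Build K (tensor A) A *:%R (contr phi) (contr_is_linear phi).

Lemma contr_tens (phi : {scalar A}) x y : contr phi (tens x y) = phi y *: x.
Proof.
rewrite /contr [in RHS](coord_vbasis (memvf x)) scaler_sumr; apply: eq_bigr => p _.
rewrite scalerA mulrC [in RHS](coord_vbasis (memvf y)) linear_sum mulr_sumr.
by congr (_ *: _); apply: eq_bigr => q _; rewrite mxE linearZ /= mulrA.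
Qed.

Section StarMap.
Variables (nuinv : A -> A) (D : A -> tensor A).
Hypothesis nuinv_lin : linear nuinv.

Definition star_hom a : 'Hom(A, tensor A) := linfun (star nuinv a D).

Lemma star_hom_is_linear : linear star_hom.
Proof.
move=> c a a'; apply/lfunP => x; rewrite add_lfunE scale_lfunE !lfunE /=.
by rewrite /star nuinv_lin linearPr linearPl linearPr.
Qed.

HB.instance Definition _ :=
  GRing.isLinear.Build K A 'Hom(A, tensor A) *:%R star_hom star_hom_is_linear.

Definition star_map : 'Hom(A, 'Hom(A, tensor A)) := linfun star_hom.

Lemma star_mapE a x : star_map a x = star nuinv a D x.
Proof. by rewrite !lfunE. Qed.

End StarMap.
End TensorAlgebra.

Section FrobeniusForm.
Variables (K : fieldType) (A : falgType K) (B : A -> A -> K).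
Hypothesis B_linl : forall (c : K) (x y z : A), B (c *: x + y) z = c * B x z + B y z.
Hypothesis B_linr : forall (c : K) (x y z : A), B x (c *: y + z) = c * B x y + B x z.
Hypothesis B_assoc : forall a b c : A, B (a * b) c = B a (b * c).

HB.instance Definition _ x := GRing.isLinear.Build K A K *%R (B x) (fun c => B_linr c x).

Definition frob_form (x : A) : K := B x 1.

HB.instance Definition _ :=
  GRing.isLinear.Build K A K *%R frob_form (fun c x y => B_linl c x y 1).

Section Nakayama.
Variables (nu nuinv : A -> A).
Hypotheses (nuM : {morph nu : x y / x * y}) (nuinvK : cancel nuinv nu).
Hypothesis nu_nakayama : forall x y : A, B x y = B y (nu x).

Lemma frob_form_nuinvM a y : frob_form (nuinv a * y) = B y a.
Proof.
by rewrite /frob_form nu_nakayama nuM nuinvK -(B_assoc 1) mul1r -nu_nakayama.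
Qed.

Variables (n : nat) (e ed : n.-tuple A).
Hypotheses (e_basis : basis_of fullv e)
  (ed_dual : forall i j : 'I_n, B ed`_i e`_j = (i == j)%:R).

Lemma coord_dual_basis i a : coord e i a = B ed`_i a.
Proof.
rewrite {2}(coord_basis e_basis (memvf a)) linear_sum (bigD1 i) //= big1 => [|j ji].
  by rewrite linearZ /= ed_dual eqxx mulr1 addr0.
by rewrite linearZ /= ed_dual eq_sym (negbTE ji) mulr0.
Qed.

Lemma contr_star_frob_coprod a : contr frob_form (star nuinv a (frob_coprod e ed) 1) = a.
Proof.
rewrite star_frob_coprod linear_sum [RHS](coord_basis e_basis (memvf a)).
apply: eq_bigr => i _.
by rewrite /= contr_tens /= mul1r frob_form_nuinvM coord_dual_basis.
Qed.

Lemma star_frob_coprod1_inj : injective (fun a => star nuinv a (frob_coprod e ed) 1).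
Proof. exact: can_inj contr_star_frob_coprod. Qed.

End Nakayama.
End FrobeniusForm.

Theorem proposition7 (K : fieldType) (A : falgType K)
  (B : A -> A -> K)
  (B_linl : forall (c : K) (x y z : A), B (c *: x + y) z = c * B x z + B y z)
  (B_linr : forall (c : K) (x y z : A), B x (c *: y + z) = c * B x y + B x z)
  (B_assoc : forall a b c : A, B (a * b) c = B a (b * c))
  (B_ndegl : forall x : A, (forall y : A, B x y = 0) -> x = 0)
  (B_ndegr : forall y : A, (forall x : A, B x y = 0) -> y = 0)
  (nu nuinv : A -> A)
  (nu_lin : forall (c : K) (x y : A), nu (c *: x + y) = c *: nu x + nu y)
  (nu1 : nu 1 = 1)
  (nuM : forall x y : A, nu (x * y) = nu x * nu y)
  (nuK : cancel nu nuinv) (nuinvK : cancel nuinv nu)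
  (nu_nakayama : forall x y : A, B x y = B y (nu x))
  (n : nat) (e ed : n.-tuple A)
  (e_basis : basis_of fullv e)
  (ed_dual : forall i j : 'I_n, B ed`_i e`_j = (i == j)%:R) :
  exists M : {vspace 'Hom(A, tensor A)},
    (forall f : 'Hom(A, tensor A),
       f \in M <-> exists a : A, forall x : A, f x = star nuinv a (frob_coprod e ed) x)
    /\ \dim M = n.
Proof.
have nuinv_lin : linear nuinv.
  by move=> c x y; apply: (can_inj nuK); rewrite nu_lin !nuinvK.
pose star_Delta := star_map nuinv (frob_coprod e ed).
have star_DeltaE := star_mapE (frob_coprod e ed) nuinv_lin.
have star_Delta_inj : injective star_Delta.
  move=> a a' /lfunP/(_ 1); rewrite !star_DeltaE.
  exact: (star_frob_coprod1_inj B_linl B_linr B_assoc nuM nuinvK nu_nakayama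
    e_basis ed_dual).
exists (limg star_Delta); split.
  move=> f; split=> [/memv_imgP[a _ ->] | [a fE]].
    by exists a => x; rewrite star_DeltaE.
  apply/memv_imgP; exists a; first exact: memvf.
  by apply/lfunP => x; rewrite fE star_DeltaE.
move/lker0P/eqP: star_Delta_inj => ker0.
by rewrite limg_dim_eq ?(size_basis e_basis) // ker0 capv0.
Qed.
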